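(* Fix integers $n\ge 2$, $m\ge 1$ and prompts $x_1,\dots,x_n$ (deterministic). For each $i$, let $y_i^1,\dots,y_i^m$ be i.i.d. responses drawn from a distribution $\pi(\cdot\mid x_i)$, independently across $i$, and let $r_i^j=r(x_i,y_i^j)$ be real rewards with finite variance. Let $\mu_i=\mathbb{E}[r(x_i,y)]$ and $\sigma_i^2=\mathrm{Var}[r(x_i,y)]$ for $y\sim\pi(\cdot\mid x_i)$. Define $\hat\mu_i=\frac1m\sum_{j=1}^m r_i^j$, $\hat{\bar\mu}=\frac1{nm}\sum_{i=1}^n\sum_{j=1}^m r_i^j$, and for $\lambda\in[0,1]$ the baseline $b_i^j(\lambda)=(1-\lambda)\hat\mu_i+\lambda\hat{\bar\mu}$. Let $$v=\frac1{nm}\sum_{i=1}^n\sigma_i^2,\qquad \bar\mu=\frac1n\sum_{i=1}^n\mu_i,\qquad s=\frac1{n-1}\sum_{i=1}^n(\mu_i-\bar\mu)^2,$$ and assume $s+v>0$. Then the function $$\lambda\mapsto \frac1{mn}\sum_{i=1}^n\sum_{j=1}^m\mathbb{E}\big[(b_i^j(\lambda)-\mu_i)^2\big]$$ (expectation over the responses) is minimized over $\lambda\in[0,1]$ at $\lambda^\star=\dfrac{v}{s+v}$. *)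

From HB Require Import structures.
From mathcomp Require Import all_boot all_order all_algebra.
From mathcomp Require Import all_classical all_reals all_analysis.
Set Implicit Arguments. Unset Strict Implicit. Unset Printing Implicit Defensive.
Import Order.TTheory GRing.Theory Num.Theory.
Local Open Scope classical_set_scope.
Local Open Scope ring_scope.

Definition mutually_independent {d} {T : measurableType d} {R : realType}
  (P : probability T R) (I : finType) (X : I -> {RV P >-> R}) : Prop :=
  forall (J : {set I}) (B : I -> set R), (forall k, measurable (B k)) ->
    P (\bigcap_(k in [set k | k \in J]) (X k @^-1` B k)) =
    (\prod_(k in J) P (X k @^-1` B k))%E.

Definition muhat {d} {T : measurableType d} {R : realType} (n m : nat)
  (r : 'I_n -> 'I_m -> T -> R) (i : 'I_n) : T -> R :=
  fun w => m%:R^-1 * \sum_(j < m) r i j w.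

Definition mubarhat {d} {T : measurableType d} {R : realType} (n m : nat)
  (r : 'I_n -> 'I_m -> T -> R) : T -> R :=
  fun w => (n * m)%:R^-1 * \sum_(i < n) \sum_(j < m) r i j w.

Definition baseline {d} {T : measurableType d} {R : realType} (n m : nat)
  (r : 'I_n -> 'I_m -> T -> R) (lam : R) (i : 'I_n) (j : 'I_m) : T -> R :=
  fun w => (1 - lam) * muhat r i w + lam * mubarhat r w.

Definition baseline_mse {d} {T : measurableType d} {R : realType}
  (P : probability T R) (n m : nat) (r : 'I_n -> 'I_m -> T -> R)
  (mu : 'I_n -> R) (lam : R) : \bar R :=
  (((m * n)%:R^-1)%:E *
   \sum_(i < n) \sum_(j < m)
      'E_P[fun w => ((baseline r lam i j w - mu i) ^+ 2)%R])%E.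

Definition vbar {R : realType} (n m : nat) (sig2 : 'I_n -> R) : R :=
  (n * m)%:R^-1 * \sum_(i < n) sig2 i.

Definition mubar {R : realType} (n : nat) (mu : 'I_n -> R) : R :=
  n%:R^-1 * \sum_(i < n) mu i.

Definition sbar {R : realType} (n : nat) (mu : 'I_n -> R) : R :=
  (n - 1)%:R^-1 * \sum_(i < n) (mu i - mubar mu) ^+ 2.

From HB Require Import structures.
From mathcomp Require Import all_boot all_order all_algebra.
From mathcomp Require Import all_classical all_reals all_analysis.
From mathcomp Require Import measurable_realfun.
From mathcomp Require Import ring.
Import Order.TTheory GRing.Theory Num.Theory.
Local Open Scope classical_set_scope.
Local Open Scope ring_scope.

(* The baseline b_i^j(lam) is a linear combination of the rewards, with weight
   (1 - lam)/m + lam/(nm) on the m rewards of prompt i and lam/(nm) on all the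
   others.  Independent rewards are uncorrelated, so the mean squared error of
   such a combination around mu_i is  sum_p w_p^2 sigma_p^2 + (sum_p w_p mu_p -
   mu_i)^2, and here the bias term is lam (bar mu - mu_i).  Averaging over i and
   j yields the closed form  v + (n-1)/n ((s + v) lam^2 - 2 v lam),  a parabola
   in lam whose vertex is v / (s + v). *)

Lemma Lfun2_Lfun1 {R : realType} {d} {T : measurableType d}
  {P : probability T R} {f : T -> R} : f \in Lfun P 2%:E -> f \in Lfun P 1.
Proof. exact/Lfun_subset12/fin_num_measure. Qed.

Section independence.
Context {R : realType} {d} {T : measurableType d} (P : probability T R).
Local Open Scope ereal_scope.

Definition independent_RVs2 (X Y : {RV P >-> R}) : Prop :=
  forall A B, measurable A -> measurable B ->
    P (X @^-1` A `&` Y @^-1` B) = P (X @^-1` A) * P (Y @^-1` B).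

Lemma mutually_independent_RVs2 (I : finType) (X : I -> {RV P >-> R}) p q :
  mutually_independent X -> p != q -> independent_RVs2 (X p) (X q).
Proof.
move=> indX pq A B mA mB.
pose B2 k := if k == p then A else if k == q then B else setT.
have mB2 k : measurable (B2 k) by rewrite /B2; case: ifP => //; case: ifP.
have qpF : (q == p) = false by rewrite eq_sym; exact/negbTE.
have := indX [set p; q]%SET B2 mB2.
rewrite big_setU1 /= ?big_set1 ?inE // /B2 eqxx qpF eqxx => <-.
congr (P _); apply/seteqP; split=> [w [Ap Bq] k /=|w pqX].
- by rewrite in_set2 => /orP[] /eqP ->; rewrite ?eqxx ?qpF ?eqxx.
- split; [have := pqX p | have := pqX q];
    by rewrite /= in_set2 ?eqxx ?qpF ?eqxx ?orbT => /(_ isT).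
Qed.

Lemma expectation_distribution (X : {RV P >-> R}) :
  (X : T -> R) \in Lfun P 1 -> \int[distribution P X]_y y%:E = 'E_P[X].
Proof.
move=> X1; rewrite expectation_def integral_distribution//.
exact/Lfun1_integrable.
Qed.

Lemma expectation_mul_independent (X Y : {RV P >-> R}) :
  independent_RVs2 X Y -> (X : T -> R) \in Lfun P 1 ->
  (Y : T -> R) \in Lfun P 1 -> ((X : T -> R) \* Y)%R \in Lfun P 1 ->
  'E_P[(X : T -> R) \* Y] = 'E_P[X] * 'E_P[Y].
Proof.
(* The joint law of (X, Y) is the product of the marginal laws, by uniqueness
   of the product measure; Fubini then splits the integral of x * y. *)
move=> indXY X1 Y1 XY1.
have mXY : measurable_fun setT (fun w => (X w, Y w)).
  exact: measurable_fun_pair.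
pose XY : {mfun T >-> (R * R)%type} :=
  HB.pack (fun w => (X w, Y w)) (isMeasurableFun.Build _ _ _ _ _ mXY).
have joint_prod A : measurable A ->
    (distribution P X \x distribution P Y) A = distribution P XY A.
  exact: (product_measure_unique (m' := distribution P XY)).
pose mul := fun z : (R * R)%type => (z.1 * z.2)%:E.
have mmul : measurable_fun setT mul.
  by apply/measurable_EFinP; apply: measurable_funM.
have int_joint : (distribution P XY).-integrable setT mul.
  by apply: (integrable_pushforward mXY mmul) => //; exact/Lfun1_integrable.
have int_prod : (distribution P X \x distribution P Y).-integrable setT mul.
  apply/integrableP; split => //.
  rewrite (eq_measure_integral (distribution P XY)) => [|A mA _];
    last exact: joint_prod.
  by case/integrableP : int_joint.
have mEFin : measurable_fun [set: R] (EFin : R -> \bar R).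
  exact/measurable_EFinP.
have int_EFin (Z : {RV P >-> R}) : (Z : T -> R) \in Lfun P 1 ->
    (distribution P Z).-integrable setT EFin.
  move=> Z1; apply: (integrable_pushforward (measurable_funPT Z) mEFin) => //.
  exact/Lfun1_integrable.
transitivity (\int[distribution P XY]_z mul z).
  by rewrite unlock integral_distribution//; exact/Lfun1_integrable.
rewrite (eq_measure_integral (distribution P X \x distribution P Y))
  => [|A mA _]; last exact/esym/joint_prod.
rewrite -(integral12_prod_meas1 int_prod).
transitivity (\int[distribution P X]_x (x%:E * 'E_P[Y])).
  apply: eq_integral => x _; rewrite /fubini_F /mul /=.
  under eq_integral do rewrite EFinM.
  by rewrite (integralZl measurableT (int_EFin Y Y1)) expectation_distribution.
rewrite -(fineK (expectation_fin_num Y1)) integralZr ?int_EFin//.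
by rewrite expectation_distribution.
Qed.

Lemma covariance_independent (X Y : {RV P >-> R}) : independent_RVs2 X Y ->
  (X : T -> R) \in Lfun P 2%:E -> (Y : T -> R) \in Lfun P 2%:E ->
  covariance P X Y = 0.
Proof.
move=> indXY X2 Y2; have XY1 := Lfun2_mul_Lfun1 X2 Y2.
have [X1 Y1] := (Lfun2_Lfun1 X2, Lfun2_Lfun1 Y2).
rewrite covarianceE// expectation_mul_independent// subee//.
by rewrite fin_numM ?expectation_fin_num.
Qed.

End independence.

Section linear_combination.
Context {R : realType} {d} {T : measurableType d} (P : probability T R).
Local Notation L2 := (Lfun P 2%:E).
Local Open Scope ereal_scope.

Lemma lincomb_Lfun2 (I : Type) (s : seq I) (a : I -> R) (X : I -> T -> R) :
  (forall p, X p \in L2) -> (\sum_(p <- s) a p \o* X p)%R \in L2.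
Proof.
(* The submodule structure of [Lfun P p] is only found with [1 <= p] in the
   context. *)
have p1 : 1 <= (2%:E : \bar R) by rewrite lee1n.
by move=> X2; apply: rpred_sum => p _; exact: Lfun_scale.
Qed.

Lemma expectation_lincomb (I : Type) (s : seq I) (a : I -> R)
    (X : I -> T -> R) :
  (forall p, X p \in Lfun P 1) ->
  'E_P[(\sum_(p <- s) a p \o* X p)%R] = \sum_(p <- s) (a p)%:E * 'E_P[X p].
Proof.
move=> X1; elim: s => [|p s IHs].
  by rewrite !big_nil -[0%R]/(cst 0%R) expectation_cst.
have p1 : 1 <= (1 : \bar R) by [].
rewrite !big_cons expectationD ?Lfun_scale//; last first.
  by apply: rpred_sum => q _; exact: Lfun_scale.
by rewrite expectationZl// IHs.
Qed.

Lemma covariance_lincombl (I : Type) (s : seq I) (a : I -> R) (X : I -> T -> R)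
    (Y : T -> R) :
  (forall p, X p \in L2) -> Y \in L2 ->
  covariance P (\sum_(p <- s) a p \o* X p)%R Y =
  \sum_(p <- s) (a p)%:E * covariance P (X p) Y.
Proof.
move=> X2 Y2; elim: s => [|p s IHs].
  by rewrite !big_nil -[0%R]/(cst 0%R) covariance_cst_l.
rewrite !big_cons covarianceDl ?lincomb_Lfun2 ?Lfun_scale ?ler1n// IHs.
by rewrite covarianceZl ?(Lfun2_mul_Lfun1 (X2 p)) ?Lfun2_Lfun1.
Qed.

Lemma variance_lincomb_uncorrelated (I : finType) (a : I -> R)
    (X : I -> T -> R) :
  (forall p, X p \in L2) ->
  (forall p q, p != q -> covariance P (X p) (X q) = 0) ->
  'V_P[(\sum_p a p \o* X p)%R] = \sum_p (a p ^+ 2)%:E * 'V_P[X p].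
Proof.
move=> X2 X_uncorr; rewrite /variance covariance_lincombl ?lincomb_Lfun2//.
apply: eq_bigr => p _; rewrite covarianceC covariance_lincombl//.
rewrite (bigD1 p)//= big1 ?adde0 => [|q qp]; last by rewrite X_uncorr ?mule0.
by rewrite muleA -EFinM -expr2.
Qed.

Lemma expectation_sqr_dev (Y : T -> R) (e v c : R) : Y \in L2 ->
  'E_P[Y] = e%:E -> 'V_P[Y] = v%:E ->
  'E_P[(fun w => (Y w - c) ^+ 2)%R] = (v + (e - c) ^+ 2)%:E.
Proof.
move=> Y2 EY VY.
have p1 : 1 <= (2%:E : \bar R) by rewrite lee1n.
have Yc2 : (Y \- cst c)%R \in L2 by rewrite rpredB// Lfun_cst.
have finE : 'E_P[(fun w => (Y w - c) ^+ 2)%R] \is a fin_num.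
  exact: expectation_fin_num (Lfun2_mul_Lfun1 Yc2 Yc2).
have := varianceE Yc2; rewrite varianceB_cst_r// VY.
rewrite expectationB ?(Lfun2_Lfun1 (P := P)) ?Lfun_cst// EY expectation_cst.
have -> : ((Y \- cst c) ^+ 2)%R = (fun w => (Y w - c) ^+ 2)%R.
  by apply/funext => w; rewrite /= !fctE.
rewrite -(fineK finE) -!EFinB => -[->].
by rewrite expr2 subrK.
Qed.

Lemma expectation_sqr_lincomb_uncorrelated {I : finType} {a : I -> R}
    {X : I -> T -> R} {mX vX : I -> R} {c : R} :
  (forall p, X p \in L2) ->
  (forall p q, p != q -> covariance P (X p) (X q) = 0) ->
  (forall p, 'E_P[X p] = (mX p)%:E) -> (forall p, 'V_P[X p] = (vX p)%:E) ->
  'E_P[(fun w => ((\sum_p a p \o* X p) w - c) ^+ 2)%R] =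
  (\sum_p a p ^+ 2 * vX p + (\sum_p a p * mX p - c) ^+ 2)%:E.
Proof.
move=> X2 X_uncorr EX VX.
apply: expectation_sqr_dev; first exact: lincomb_Lfun2.
- rewrite expectation_lincomb => [|p]; last exact: Lfun2_Lfun1.
  by rewrite -sumEFin; apply: eq_bigr => p _; rewrite EX.
- rewrite variance_lincomb_uncorrelated// -sumEFin.
  by apply: eq_bigr => p _; rewrite VX.
Qed.

End linear_combination.

Lemma sum_indicator_fst (R : comRingType) n m (i : 'I_n) (u t : R)
    (G : 'I_n * 'I_m -> R) :
  \sum_(p : 'I_n * 'I_m) (u * (p.1 == i)%:R + t) * G p =
  u * \sum_(l < m) G (i, l) + t * \sum_(k < n) \sum_(l < m) G (k, l).
Proof.
transitivity (\sum_(k < n) \sum_(l < m) (u * (k == i)%:R + t) * G (k, l)).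
  by rewrite pair_big; apply: eq_bigr => -[k l].
under eq_bigr => k _ do rewrite -mulr_sumr mulrDl.
rewrite big_split /= -mulr_sumr (bigD1 i) //= eqxx mulr1.
by rewrite [X in _ + X + _]big1 ?addr0 // => k /negbTE->; rewrite mulr0 mul0r.
Qed.

Definition baseline_weight {R : fieldType} {n m : nat} (lam : R) (i : 'I_n)
    (p : 'I_n * 'I_m) : R :=
  (1 - lam) / m%:R * (p.1 == i)%:R + lam / (n * m)%:R.

Lemma baselineE {R : realType} {d} {T : measurableType d} {n m : nat}
    (r : 'I_n -> 'I_m -> T -> R) (lam : R) i j :
  baseline r lam i j = (\sum_p baseline_weight lam i p \o* r p.1 p.2)%R.
Proof.
apply/funext => w; rewrite fct_sumE /=.
under eq_bigr do rewrite mulrC.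
rewrite sum_indicator_fst /baseline /muhat /mubarhat /=.
by rewrite !mulrA.
Qed.

Section baseline_mse.
Context {R : realType} {d : measure_display} {T : measurableType d}.
Context {P : probability T R} {n m : nat}.
Context {r : 'I_n -> 'I_m -> {RV P >-> R}} {mu sig2 : 'I_n -> R}.
Hypotheses (hn : (2 <= n)%N) (hm : (1 <= m)%N).
Hypothesis hindep : mutually_independent (fun k : 'I_n * 'I_m => r k.1 k.2).
Hypothesis hL2 : forall i j, (r i j : T -> R) \in Lfun P 2%:E.
Hypothesis hmu : forall i j, ('E_P[r i j] = (mu i)%:E)%E.
Hypothesis hsig : forall i j, ('V_P[r i j] = (sig2 i)%:E)%E.

Lemma rewards_uncorrelated (p q : 'I_n * 'I_m) :
  p != q -> covariance P (r p.1 p.2) (r q.1 q.2) = 0%E.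
Proof.
move=> pq; apply: covariance_independent; last 2 first.
- exact: hL2.
- exact: hL2.
- exact: mutually_independent_RVs2 hindep pq.
Qed.

Lemma expectation_baseline_sqr_dev lam i j :
  ('E_P[(fun w => (baseline (fun i j => r i j : T -> R) lam i j w - mu i)
                  ^+ 2)%R] =
  (((1 - lam) ^+ 2 / m%:R + 2 * lam * (1 - lam) / (n * m)%:R) * sig2 i
   + lam ^+ 2 / (n ^ 2 * m)%:R * \sum_k sig2 k
   + lam ^+ 2 * (mu i - mubar mu) ^+ 2)%:E)%E.
Proof.
rewrite baselineE (expectation_sqr_lincomb_uncorrelated P _
  rewards_uncorrelated (fun p => hmu p.1 p.2) (fun p => hsig p.1 p.2));
  last by move=> p; exact: hL2.
pose u := (1 - lam) / m%:R; pose t := lam / (n * m)%:R.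
have weight_sqr (p : 'I_n * 'I_m) : baseline_weight lam i p ^+ 2 =
    (u ^+ 2 + 2 * u * t) * (p.1 == i)%:R + t ^+ 2.
  by rewrite /baseline_weight -/u -/t; case: (p.1 == i) => /=; ring.
under eq_bigr => p _ do rewrite weight_sqr.
rewrite /baseline_weight -/u -/t !sum_indicator_fst /=.
have sum_cst (x : R) : \sum_(l < m) x = x * m%:R.
  by rewrite sumr_const card_ord mulr_natr.
have m0 : m%:R != 0 :> R by rewrite pnatr_eq0 -lt0n.
have n0 : n%:R != 0 :> R by rewrite pnatr_eq0 -lt0n ltnW.
under [X in t ^+ 2 * X]eq_bigr do rewrite sum_cst.
under [X in t * X]eq_bigr do rewrite sum_cst.
rewrite !sum_cst -!mulr_suml /mubar /u /t !natrM; congr EFin.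
by field; rewrite m0 n0.
Qed.

Lemma baseline_mseE lam :
  baseline_mse P (fun i j => r i j : T -> R) mu lam =
  (vbar m sig2 + (n - 1)%:R / n%:R *
     ((sbar mu + vbar m sig2) * lam ^+ 2 - 2 * vbar m sig2 * lam))%:E.
Proof.
rewrite /baseline_mse.
under eq_bigr => i _ do
  under eq_bigr => j _ do rewrite expectation_baseline_sqr_dev.
under eq_bigr => i _ do rewrite sumEFin sumr_const card_ord.
rewrite sumEFin -EFinM sumrMnl !big_split /= -!mulr_sumr sumr_const card_ord.
congr EFin; rewrite -(mulr_natr (_ + _) m) -(mulr_natr (\sum_k sig2 k) n).
rewrite /sbar /vbar !natrM.
have m0 : m%:R != 0 :> R by rewrite pnatr_eq0 -lt0n.
have n0 : n%:R != 0 :> R by rewrite pnatr_eq0 -lt0n ltnW.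
have n1 : n%:R - 1 != 0 :> R by rewrite subr_eq0 pnatr_eq1 gtn_eqF.
rewrite natrB; last exact: ltnW.
by field; rewrite m0 n0 n1.
Qed.

End baseline_mse.

Lemma quadratic_vertex_le {R : realFieldType} (a b x : R) : 0 < a ->
  a * (b / a) ^+ 2 - 2 * b * (b / a) <= a * x ^+ 2 - 2 * b * x.
Proof.
move=> a_gt0; rewrite -subr_ge0.
have -> : a * x ^+ 2 - 2 * b * x - (a * (b / a) ^+ 2 - 2 * b * (b / a)) =
    a * (x - b / a) ^+ 2 by field; rewrite gt_eqF.
by rewrite mulr_ge0 ?sqr_ge0 ?ltW.
Qed.

Theorem proposition2 (R : realType) (d : measure_display) (T : measurableType d)
  (P : probability T R) (n m : nat) (hn : (2 <= n)%N) (hm : (1 <= m)%N)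
  (r : 'I_n -> 'I_m -> {RV P >-> R})
  (mu sig2 : 'I_n -> R)
  (hindep : mutually_independent (fun k : 'I_n * 'I_m => r k.1 k.2))
  (hident : forall i j j', distribution P (r i j) = distribution P (r i j'))
  (hL2 : forall i j, (r i j : T -> R) \in Lfun P 2%:E)
  (hmu : forall i j, ('E_P[r i j] = (mu i)%:E)%E)
  (hsig : forall i j, ('V_P[r i j] = (sig2 i)%:E)%E)
  (hpos : 0 < sbar mu + vbar m sig2) :
  let lamstar := vbar m sig2 / (sbar mu + vbar m sig2) in
  0 <= lamstar <= 1 /\
  forall lam : R, 0 <= lam <= 1 ->
    (baseline_mse P (fun i j => r i j : T -> R) mu lamstar
     <= baseline_mse P (fun i j => r i j : T -> R) mu lam)%E.
Proof.
move=> lamstar.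
have sig2_ge0 i : 0 <= sig2 i.
  by have := variance_ge0 P (r i (Ordinal hm)); rewrite hsig lee_fin.
have v_ge0 : 0 <= vbar m sig2 by rewrite mulr_ge0 ?invr_ge0 ?sumr_ge0.
have s_ge0 : 0 <= sbar mu.
  by rewrite mulr_ge0 ?invr_ge0 ?sumr_ge0// => i _; exact: sqr_ge0.
split.
  by rewrite /lamstar divr_ge0 ?(ltW hpos)//= ler_pdivrMr// mul1r lerDr.
move=> lam _; rewrite !(baseline_mseE hn hm hindep hL2 hmu hsig) lee_fin.
by rewrite lerD2l ler_wpM2l ?divr_ge0// quadratic_vertex_le.
Qed.
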